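(* Let $A$ be a nonempty finite set of positive integers. The number of nonempty subsets of $A$ whose elements are pairwise co-prime equals \[ \# \left\{B\subseteq A:\ B\neq\emptyset\ \text{and}\ 2|B| -1 = \left( 1 + 4 \sum_{d=1}^{\sup B} \mu(d)\, v(B,d)\, (v(B,d)-1) \right)^{1/2} \right\}. \]
   Context: For a nonempty finite set $B$ of positive integers, $\sup B$ is its largest element and, for a positive integer $d$, $v(B,d)$ is the number of multiples of $d$ in $B$. $\mu$ is the Möbius function. A set is said to have pairwise co-prime elements if every $2$-element subset has gcd $1$ (vacuously true for singletons). *)

From HB Require Import structures.
From mathcomp Require Import all_boot all_order all_algebra.
From mathcomp Require Import finmap.
Set Implicit Arguments. Unset Strict Implicit. Unset Printing Implicit Defensive.
Import Order.TTheory GRing.Theory Num.Theory.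
Local Open Scope fset_scope.

(* Moebius function on positive integers (value at 0 is irrelevant; set to 0):
   mu n = (-1)^k if n is a product of k distinct primes, 0 otherwise. *)
Definition moebius (n : nat) : int :=
  if n == 0%N then 0%R
  else if all (fun p => logn p n == 1%N) (primes n)
       then ((-1) ^+ size (primes n))%R else 0%R.

Definition supB (B : {fset nat}) : nat := \max_(b <- B) b.

Definition vmult (B : {fset nat}) (d : nat) : nat := #|` [fset b in B | d %| b] |.

Definition pairwise_coprime (B : {fset nat}) : bool :=
  all (fun a => all (fun b => (a == b) || coprime a b) B) B.

Definition mu_sum (B : {fset nat}) : int :=
  (\sum_(1 <= d < (supB B).+1)
     moebius d * (vmult B d)%:Z * ((vmult B d)%:Z - 1))%R.

From HB Require Import structures.
From mathcomp Require Import all_boot all_order all_algebra finmap.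
From mathcomp Require Import zify ring lra.
Import Order.TTheory GRing.Theory Num.Theory.

Set Implicit Arguments.
Unset Strict Implicit.
Unset Printing Implicit Defensive.
Local Open Scope fset_scope.

(* Moebius inversion, sum_(d | gcd(a,b)) mu(d) = [gcd(a,b) = 1], turns the
   term v(B,d)(v(B,d)-1) -- the number of ordered pairs of distinct elements
   of B both divisible by d -- into a count: the Moebius sum is the number T
   of ordered pairs of distinct co-prime elements of B.  With n = |B|, B is
   pairwise co-prime iff T = n(n-1), i.e. iff 1 + 4T = (2n-1)^2. *)

Lemma moebius_sqr_dvd p d : prime p -> (0 < d)%N -> p * p %| d -> moebius d = 0%R.
Proof.
move=> p_pr d_gt0 ppd; rewrite /moebius gtn_eqF //=.
have p_in : p \in primes d.
  by rewrite mem_primes p_pr d_gt0 (dvdn_trans (dvdn_mulr p (dvdnn p)) ppd).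
have : (2 <= logn p d)%N by rewrite -pfactor_dvdn // expnS expn1.
by case: allP => // /(_ _ p_in) /eqP ->.
Qed.

Lemma moebius_primeM p d : prime p -> (0 < d)%N -> ~~ (p %| d) ->
  moebius (p * d) = (- moebius d)%R.
Proof.
move=> p_pr d_gt0 pNd; have p_gt0 := prime_gt0 p_pr.
have pd_gt0 : (0 < p * d)%N by rewrite muln_gt0 p_gt0.
have pNprimes : p \notin primes d by rewrite mem_primes (negbTE pNd) !andbF.
have primesM : perm_eq (primes (p * d)) (p :: primes d).
  apply: uniq_perm; rewrite ?primes_uniq //= ?pNprimes ?primes_uniq // => q.
  by rewrite primesM // primes_prime // !inE.
rewrite /moebius !gtn_eqF // (perm_all _ primesM) (perm_size primesM) /=.
rewrite lognM // logn_prime // eqxx logn_coprime ?prime_coprime // addn0 /=.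
rewrite (@eq_in_all _ _ (fun q => logn q d == 1%N)); last first.
  move=> q q_in; rewrite lognM // logn_prime //.
  by have /negbTE-> : q != p by apply: contraNneq pNprimes => <-.
by case: all => //; rewrite exprS mulN1r.
Qed.

Lemma perm_divisors_prime_exact p g : prime p -> (0 < g)%N -> p %| g ->
  perm_eq [seq d <- divisors g | (p %| d) && ~~ (p * p %| d)]
          [seq p * e | e <- [seq d <- divisors g | ~~ (p %| d)]].
Proof.
move=> p_pr g_gt0 pg; have p_gt0 := prime_gt0 p_pr.
apply: uniq_perm.
- by rewrite filter_uniq // divisors_uniq.
- rewrite map_inj_uniq ?filter_uniq ?divisors_uniq //.
  by move=> x y /(congr1 (divn^~ p)); rewrite !mulKn.
move=> x; rewrite mem_filter -dvdn_divisors //; apply/idP/mapP.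
- case/andP=> /andP[/dvdnP[e ->] ppNe] ex_g.
  rewrite [e * p]mulnC in ppNe ex_g *; exists e => //.
  rewrite mem_filter -dvdn_divisors // (dvdn_trans (dvdn_mull p (dvdnn e))) //.
  by rewrite andbT; apply: contra ppNe => pe; rewrite dvdn_pmul2l.
- case=> e; rewrite mem_filter -dvdn_divisors // => /andP[pNe e_g] ->.
  by rewrite dvdn_mulr // dvdn_pmul2l // pNe Gauss_dvd ?prime_coprime // pg e_g.
Qed.

Lemma sum_moebius_divisors g : (0 < g)%N ->
  (\sum_(d <- divisors g) moebius d)%R = (g == 1)%:R%R.
Proof.
move=> g_gt0; case: (ltngtP g 1) => [|g_gt1|->]; first by case: g g_gt0.
  2: by rewrite big_seq1.
have p_pr := pdiv_prime g_gt1; set p := pdiv g in p_pr *.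
have div_gt0 d : d \in divisors g -> (0 < d)%N.
  by rewrite -dvdn_divisors // => /dvdn_gt0; apply.
rewrite (bigID (dvdn p)) /= (bigID (fun d => p * p %| d)) /=.
rewrite big1_seq ?add0r => [|d /andP[/andP[_ ppd] d_in]]; last first.
  exact: moebius_sqr_dvd p_pr (div_gt0 d d_in) ppd.
rewrite -big_filter (perm_big _ (perm_divisors_prime_exact p_pr g_gt0 (pdiv_dvd g))).
rewrite big_map -[X in (_ + X)%R]big_filter big_seq_cond.
rewrite (eq_bigr (fun d => - moebius d)%R) => [|d]; last first.
  by rewrite andbT mem_filter => /andP[pNd d_in]; rewrite moebius_primeM ?div_gt0.
by rewrite sumrN -big_seq_cond addNr.
Qed.

Lemma big_nat_divisors g N (F : nat -> int) : (0 < g)%N -> (g < N)%N ->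
  (\sum_(1 <= d < N | (d %| g)%N) F d = \sum_(d <- divisors g) F d)%R.
Proof.
move=> g_gt0 g_lt_N; rewrite -big_filter; apply/perm_big/uniq_perm.
- by rewrite filter_uniq ?iota_uniq.
- exact: divisors_uniq.
move=> d; rewrite mem_filter mem_index_iota -dvdn_divisors //.
case dg: (d %| g); rewrite ?andbF //=.
by rewrite (dvdn_gt0 g_gt0 dg) (leq_ltn_trans (dvdn_leq g_gt0 dg) g_lt_N).
Qed.

Lemma sum_nat_bool (T : Type) (s : seq T) (P : pred T) :
  \sum_(a <- s) (P a : nat) = count P s.
Proof.
by rewrite -sum1_count [RHS]big_mkcond; apply: eq_bigr => a _; case: (P a).
Qed.

Lemma sum_distinct_pairs (T : eqType) (s : seq T) (P : pred T) : uniq s ->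
  \sum_(a <- s) \sum_(b <- s) ((a != b) && P a && P b : nat)
  = count P s * (count P s).-1.
Proof.
move=> s_uniq; rewrite -{1}sum_nat_bool big_distrl /=; apply: eq_big_seq => a a_in.
case: (boolP (P a)) => Pa; last by rewrite big1 // => b _; rewrite andbF.
have split_a : count P s = (\sum_(b <- s) ((a != b) && P b : nat) + 1)%N.
  have count_a : count_mem a s = 1%N by rewrite count_uniq_mem ?a_in.
  rewrite -count_a -!sum_nat_bool -big_split; apply: eq_bigr => b _ /=.
  by case: (eqVneq a b) => [<-|_]; rewrite ?Pa //= addn0.
by rewrite split_a addn1 mul1n; apply: eq_bigr => b _; rewrite andbT.
Qed.

Lemma vmultE (B : {fset nat}) d : vmult B d = count (dvdn d) B.
Proof.
rewrite /vmult (_ : [fset b in B | d %| b] = [fset b in [seq b <- B | d %| b]]).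
  by rewrite card_fseq undup_id ?filter_uniq // size_filter.
by apply/fsetP => x; rewrite !inE mem_filter andbC.
Qed.

Definition coprime_pairs (B : {fset nat}) : nat :=
  \sum_(a <- B) \sum_(b <- B) ((a != b) && coprime a b : nat).

Lemma mu_sum_coprime_pairs (B : {fset nat}) : (forall a, a \in B -> (0 < a)%N) ->
  mu_sum B = Posz (coprime_pairs B).
Proof.
move=> B_pos; rewrite /mu_sum.
have pairs_d d : ((vmult B d)%:Z * ((vmult B d)%:Z - 1))%R
    = (\sum_(a <- B) \sum_(b <- B) ((a != b) && (d %| a) && (d %| b) : nat))%:R%R.
  by rewrite sum_distinct_pairs // -vmultE natz; case: vmult => //= c; lia.
under eq_bigr do rewrite -mulrA pairs_d natr_sum mulr_sumr.
rewrite exchange_big /coprime_pairs -natz natr_sum; apply: eq_big_seq => a a_in /=.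
under eq_bigr do rewrite natr_sum mulr_sumr.
rewrite exchange_big natr_sum; apply: eq_big_seq => b b_in /=.
have gcd_gt0 : (0 < gcdn a b)%N by rewrite gcdn_gt0 B_pos.
have gcd_lt : (gcdn a b < (supB B).+1)%N.
  by rewrite ltnS (leq_trans (dvdn_leq (B_pos a a_in) (dvdn_gcdl a b)))
    ?(leq_bigmax_seq (F := id)).
case: (eqVneq a b) => [<-|_] /=; first by rewrite big1 // => d _; rewrite mulr0.
rewrite (eq_bigr (fun d => if (d %| gcdn a b)%N then moebius d else 0%R)) => [|d _].
  by rewrite -big_mkcond big_nat_divisors // sum_moebius_divisors.
by rewrite dvdn_gcd; case: (_ && _); rewrite ?mulr1 ?mulr0.
Qed.

Lemma pairwise_coprimeE (B : {fset nat}) :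
  pairwise_coprime B = (coprime_pairs B == #|` B| * #|` B|.-1)%N.
Proof.
have all_pairs := sum_distinct_pairs xpredT (fset_uniq B).
rewrite count_predT /= in all_pairs.
set U := \sum_(a <- B) \sum_(b <- B) ((a != b) && ~~ coprime a b : nat).
have U_eq0 : pairwise_coprime B = (U == 0%N).
  rewrite /U sum_nat_seq_eq0 /pairwise_coprime; apply: eq_all => a /=.
  by rewrite sum_nat_seq_eq0; apply: eq_all => b; case: (a == b); case: coprime.
have split_pairs : (coprime_pairs B + U = #|` B| * #|` B|.-1)%N.
  rewrite -all_pairs -big_split; apply: eq_bigr => a _.
  by rewrite -big_split; apply: eq_bigr => b _ /=; case: (a != b); case: coprime.
by rewrite U_eq0 -split_pairs; apply/eqP/eqP; lia.
Qed.

Local Open Scope ring_scope.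

Lemma eq_sqrt_pronic (R : rcfType) (n t : nat) : (0 < n)%N ->
  ((2 * n%:R - 1 : R) == Num.sqrt (1 + 4 * t%:R)) = (t == n * n.-1)%N.
Proof.
case: n => // m _; set x : R := m.+1%:R.
have x_ge1 : 1 <= x by rewrite ler1n.
have odd_ge0 : 0 <= 2 * x - 1 by lra.
rewrite -[2 * x - 1]ger0_norm // -sqrtr_sqr eqr_sqrt ?exprn_ge0 //; last first.
  by rewrite addr_ge0 ?mulr_ge0.
have -> : (2 * x - 1) ^+ 2 = 1 + 4 * (m.+1 * m)%:R.
  by rewrite natrM /x -addn1 natrD; ring.
by rewrite (inj_eq (addrI 1)) (inj_eq (mulfI _)) ?eqr_nat // pnatr_eq0.
Qed.

Theorem corollary5p6 (R : rcfType) (A : {fset nat})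
  (hA0 : A != fset0) (hApos : forall a, a \in A -> (0 < a)%N) :
  #|` [fset B in fpowerset A | (B != fset0) && pairwise_coprime B] |
  = #|` [fset B in fpowerset A |
          (B != fset0) &&
          ((2 * (#|` B |)%:R - 1 : R) ==
             Num.sqrt (1 + 4 * (mu_sum B)%:~R))%R] |.
Proof.
congr #|` _|; apply/fsetP => B; rewrite !inE.
case: (boolP (B \in fpowerset A)) => //= /[!fpowersetE] /fsubsetP BA.
case: (boolP (B != fset0)) => //= B0.
rewrite mu_sum_coprime_pairs => [|a aB]; last exact/hApos/BA.
by rewrite pairwise_coprimeE eq_sqrt_pronic // cardfs_gt0.
Qed.
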